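(* With the notation and hypotheses of the uniform case (continuous $V_a$ with $0<V_a^{min}\le V_a\le V_a^{max}$, $\hat V_a=V_a/V_a^*$, delays $\tau_{min}(t),\tau_{max}(t)$ defined by $\mathcal{T}\mp V_a^*\delta=\int_{t-\tau_{min/max}(t)}^tV_a(s)ds$, and $A_U(t)=\frac1{2\delta}\int_{\tau_{min}(t)}^{\tau_{max}(t)}\frac{\beta x(t-\phi)}{\hat V_a(t-\phi)}e^{-\int_{t-\phi}^t\mu(x(s))ds}d\phi$), consider the uniformly distributed DDE $$\frac{d}{dt}x(t)=F(x(t),A_U(t)V_a(t))-\gamma(x(t))x(t),\quad t>t_0;\qquad x(s)=\rho(s),\ s\le t_0, \tag{U}$$ and the two-delay system $$\frac{d}{dt}x(t)=F(x(t),y(t)V_a(t))-\gamma(x(t))x(t),$$ $$\frac{d}{dt}y(t)=\frac1{2\delta}\Big[\frac{\beta x(t-\tau_{min}(t))}{\hat V_a(t-\tau_{min}(t))}e^{-\int_{t-\tau_{min}(t)}^t\mu(x(s))ds}\frac{V_a(t)}{V_a(t-\tau_{min}(t))}-\frac{\beta x(t-\tau_{max}(t))}{\hat V_a(t-\tau_{max}(t))}e^{-\int_{t-\tau_{max}(t)}^t\mu(x(s))ds}\frac{V_a(t)}{V_a(t-\tau_{max}(t))}\Big]-\mu(x(t))y(t). \tag{D}$$ (i) If $x$ solves (U) with history $\rho$, then $(x,y)$ with $y=A_U$ solves (D) with history $x(s)=\rho(s)$ and initial value $y(t_0)=\frac1{2\delta}\int_{\tau_{min}(t_0)}^{\tau_{max}(t_0)}\frac{\beta\rho(t_0-\phi)}{\hat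 V_a(t_0-\phi)}e^{-\int_{t_0-\phi}^{t_0}\mu(\rho(s))ds}d\phi$. (ii) A solution $(x,y)$ of (D) with history $x(s)=\eta(s)$, $s\le t_0$, gives a solution $x$ of (U) with history $\eta$ (with $y=A_U$) if and only if $y(t_0)=\frac1{2\delta}\int_{\tau_{min}(t_0)}^{\tau_{max}(t_0)}\frac{\beta\eta(t_0-\phi)}{\hat V_a(t_0-\phi)}e^{-\int_{t_0-\phi}^{t_0}\mu(\eta(s))ds}d\phi$.
   Context: $F$ is the influx function, $\gamma$ the clearance rate, $\mu$ the immature death rate, $\beta>0$, $\delta>0$, $\mathcal{T}>V_a^*\delta$ the mean maturation age. *)

From Stdlib Require Import Reals Lra ClassicalEpsilon.
Open Scope R_scope.

(* Total Riemann integral: the value of the Riemann integral of f over [a,b]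
   when f is Riemann integrable there (the value does not depend on the proof
   of integrability), and 0 otherwise. All integrands in the statement are
   continuous, so only the first branch is ever relevant. *)
Definition RInt (f : R -> R) (a b : R) : R :=
  match excluded_middle_informative
          (exists v, exists pr : Riemann_integrable f a b, RiemannInt pr = v) with
  | left H => proj1_sig (constructive_indefinite_description _ H)
  | right _ => 0
  end.

Definition Vhat (Va : R -> R) (Vs : R) (s : R) : R := Va s / Vs.

Definition kernel (beta : R) (mu : R -> R) (Va : R -> R) (Vs : R)
  (x : R -> R) (t phi : R) : R :=
  beta * x (t - phi) / Vhat Va Vs (t - phi)
  * exp (- RInt (fun s => mu (x s)) (t - phi) t).

Definition A_U (beta delta : R) (mu : R -> R) (Va : R -> R) (Vs : R)
  (tmin tmax : R -> R) (x : R -> R) (t : R) : R :=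
  / (2 * delta) * RInt (kernel beta mu Va Vs x t) (tmin t) (tmax t).

Definition cont_from (t0 : R) (f : R -> R) : Prop :=
  forall t, t0 <= t -> forall eps, 0 < eps ->
    exists d, 0 < d /\ forall s, t0 <= s -> Rabs (s - t) < d ->
      Rabs (f s - f t) < eps.

Definition solves_U (F : R -> R -> R) (gamma mu : R -> R) (beta delta : R)
  (Va : R -> R) (Vs : R) (tmin tmax : R -> R) (t0 : R) (rho x : R -> R) : Prop :=
  (forall s, s <= t0 -> x s = rho s) /\
  (forall t, continuity_pt x t) /\
  (forall t, t0 < t ->
     derivable_pt_lim x t
       (F (x t) (A_U beta delta mu Va Vs tmin tmax x t * Va t) - gamma (x t) * x t)).

Definition solves_D (F : R -> R -> R) (gamma mu : R -> R) (beta delta : R)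
  (Va : R -> R) (Vs : R) (tmin tmax : R -> R) (t0 : R) (eta x y : R -> R) : Prop :=
  (forall s, s <= t0 -> x s = eta s) /\
  (forall t, continuity_pt x t) /\
  cont_from t0 y /\
  (forall t, t0 < t ->
     derivable_pt_lim x t (F (x t) (y t * Va t) - gamma (x t) * x t)) /\
  (forall t, t0 < t ->
     derivable_pt_lim y t
       (/ (2 * delta) *
          (kernel beta mu Va Vs x t (tmin t) * (Va t / Va (t - tmin t))
           - kernel beta mu Va Vs x t (tmax t) * (Va t / Va (t - tmax t)))
        - mu (x t) * y t)).

From Stdlib Require Import Reals Lra Classical ClassicalEpsilon.
From Coquelicot Require Import Coquelicot.
From Pilot Require Import Defs.
Open Scope R_scope.

(* Let [M] be a primitive of [mu o x] and [G] one of
   [u |-> beta x(u) / hatV_a(u) * e^(M u)].  The substitution [u = t - phi] gives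
   [A_U(t) = e^(-M t) (G(t - tau_min t) - G(t - tau_max t)) / (2 delta)].  With [H] a
   primitive of [V_a], the delays satisfy [H(t - tau t) = H t - c] for a constant
   [c], so [t - tau t] is differentiable with derivative [V_a t / V_a(t - tau t)];
   hence [A_U] solves the [y]-equation of (D).  That equation is linear in [y], so a
   solution is determined by [y(t0)], and [A_U(t0)] only involves the history since
   both delays are positive. *)

Lemma Defs_RInt_ex (f : R -> R) a b :
  ex_RInt f a b -> Defs.RInt f a b = RInt.RInt f a b.
Proof.
  intro Hf. unfold Defs.RInt.
  destruct excluded_middle_informative as [Hex|Hnex].
  - destruct constructive_indefinite_description as [v [pr <-]]; simpl.
    symmetry. apply RInt_Reals.
  - exfalso. apply Hnex. exists (RiemannInt (ex_RInt_Reals_0 _ _ _ Hf)). eexists. reflexivity.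
Qed.

Lemma Defs_RInt_not_ex (f : R -> R) a b : ~ ex_RInt f a b -> Defs.RInt f a b = 0.
Proof.
  intro Hf. unfold Defs.RInt.
  destruct excluded_middle_informative as [Hex|]; [|reflexivity].
  exfalso. destruct Hex as [v [pr _]]. exact (Hf (ex_RInt_Reals_1 _ _ _ pr)).
Qed.

Lemma Defs_RInt_ext (f g : R -> R) a b :
  (forall s, Rmin a b < s < Rmax a b -> f s = g s) ->
  Defs.RInt f a b = Defs.RInt g a b.
Proof.
  intro Hfg.
  assert (Hgf : forall s, Rmin a b < s < Rmax a b -> g s = f s) by (intros; symmetry; auto).
  destruct (classic (ex_RInt f a b)) as [Hf|Hf].
  - rewrite !Defs_RInt_ex; [apply RInt_ext; exact Hfg | apply (ex_RInt_ext f) | ]; auto.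
  - rewrite !Defs_RInt_not_ex; [reflexivity | | exact Hf].
    intro Hg. exact (Hf (ex_RInt_ext g f a b Hgf Hg)).
Qed.

Lemma RInt_primitive (f P : R -> R) a b :
  (forall z, continuity_pt f z) -> (forall z, is_derive P z (f z)) ->
  RInt.RInt f a b = P b - P a.
Proof.
  intros Hf HP. apply is_RInt_unique, (is_RInt_derive P f); intros z _; [apply HP|].
  apply continuity_pt_filterlim, Hf.
Qed.

Lemma Defs_RInt_primitive (f P : R -> R) a b :
  (forall z, continuity_pt f z) -> (forall z, is_derive P z (f z)) ->
  Defs.RInt f a b = P b - P a.
Proof.
  intros Hf HP. rewrite Defs_RInt_ex; [exact (RInt_primitive f P a b Hf HP)|].
  apply (ex_RInt_continuous (V := R_CompleteNormedModule)).
  intros z _. apply continuity_pt_filterlim, Hf.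
Qed.

Lemma is_derive_RInt_0 (f : R -> R) v :
  (forall z, continuity_pt f z) -> is_derive (fun w => RInt.RInt f 0 w) v (f v).
Proof.
  intro Hf. apply is_derive_RInt with 0; [|apply continuity_pt_filterlim, Hf].
  apply filter_forall. intro w. apply RInt_correct, ex_RInt_continuous.
  intros z _. apply continuity_pt_filterlim, Hf.
Qed.

Lemma MVT_slope_bounds (H h : R -> R) m M p q :
  (forall z, is_derive H z (h z)) -> (forall z, m <= h z <= M) ->
  exists k, m <= k <= M /\ H q - H p = k * (q - p).
Proof.
  intros HH Hh.
  destruct (MVT_gen H p q h) as [c [_ Hc]]; [intros; apply HH| |].
  - intros z _. apply derivable_continuous_pt. exists (h z). apply is_derive_Reals, HH.
  - exists (h c). auto.
Qed.

Lemma derivable_pt_lim_increment (f : R -> R) p l :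
  derivable_pt_lim f p l -> forall e, 0 < e ->
  exists d, 0 < d /\
    forall z, Rabs z < d -> Rabs (f (p + z) - f p - l * z) <= e * Rabs z.
Proof.
  intros Hd e He. destruct (Hd e He) as [d Hd']. exists d. split; [apply cond_pos|].
  intros z Hz. destruct (Req_dec z 0) as [->|Hz0].
  - rewrite Rplus_0_r, Rabs_R0. replace (f p - f p - l * 0) with 0 by ring.
    rewrite Rabs_R0. lra.
  - replace (f (p + z) - f p - l * z) with (z * ((f (p + z) - f p) / z - l))
      by (field; exact Hz0).
    rewrite Rabs_mult, (Rmult_comm e).
    apply Rmult_le_compat_l; [apply Rabs_pos | left; exact (Hd' z Hz0 Hz)].
Qed.

(* The Lipschitz bound on [a] turns the linearisation of [H] at [a t] into one
   of order [|z|]: [|h D - k z| <= e (1 + L) |z|] with [D = a (t + z) - a t]. *)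
Lemma derivable_pt_lim_implicit (H K a : R -> R) (h k L t : R) :
  h <> 0 -> 0 <= L ->
  (forall z, Rabs (a (t + z) - a t) <= L * Rabs z) ->
  derivable_pt_lim H (a t) h -> derivable_pt_lim K t k ->
  (forall s, H (a s) = K s) ->
  derivable_pt_lim a t (k / h).
Proof.
  intros Hh HL Hlip HH HK Ha eps Heps.
  assert (Hah : 0 < Rabs h) by (apply Rabs_pos_lt; exact Hh).
  set (e := eps * Rabs h / (2 * (1 + L))).
  assert (He : 0 < e) by (unfold e; apply Rdiv_lt_0_compat; nra).
  destruct (derivable_pt_lim_increment H (a t) h HH e He) as [d1 [Hd1 HH1]].
  destruct (derivable_pt_lim_increment K t k HK e He) as [d2 [Hd2 HK2]].
  assert (Hd : 0 < Rmin d2 (d1 / (1 + L)))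
    by (apply Rmin_pos; [lra | apply Rdiv_lt_0_compat; lra]).
  exists (mkposreal _ Hd). simpl. intros z Hz0 Hz.
  assert (Hz2 : Rabs z < d2) by (eapply Rlt_le_trans; [exact Hz | apply Rmin_l]).
  assert (Hz1 : (1 + L) * Rabs z < d1).
  { assert (Hz1 : Rabs z < d1 / (1 + L)) by (eapply Rlt_le_trans; [exact Hz | apply Rmin_r]).
    apply (Rmult_lt_compat_l (1 + L)) in Hz1; [|lra].
    replace ((1 + L) * (d1 / (1 + L))) with d1 in Hz1 by (field; lra). exact Hz1. }
  assert (Hza : 0 < Rabs z) by (apply Rabs_pos_lt; exact Hz0).
  set (D := a (t + z) - a t).
  assert (HD : Rabs D <= L * Rabs z) by apply Hlip.
  assert (HD1 := HH1 D ltac:(lra)).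
  replace (a t + D) with (a (t + z)) in HD1 by (unfold D; ring).
  rewrite !Ha in HD1.
  assert (Hnum : Rabs (h * D - k * z) <= eps * Rabs h / 2 * Rabs z).
  { replace (h * D - k * z) with ((K (t + z) - K t - k * z) - (K (t + z) - K t - h * D)) by ring.
    eapply Rle_trans; [apply Rabs_triang|]. rewrite Rabs_Ropp.
    replace (eps * Rabs h / 2) with (e * (1 + L)) by (unfold e; field; lra).
    specialize (HK2 z Hz2). nra. }
  replace (D / z - k / h) with ((h * D - k * z) / (h * z)) by (field; split; assumption).
  unfold Rdiv. rewrite Rabs_mult, Rabs_inv, Rabs_mult.
  apply (Rmult_lt_reg_r (Rabs h * Rabs z)); [nra|].
  rewrite Rmult_assoc, Rinv_l, Rmult_1_r by nra.
  assert (0 < eps * (Rabs h * Rabs z)) by (apply Rmult_lt_0_compat; nra). lra.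
Qed.

Lemma cont_from_continuity_pt t0 (f : R -> R) :
  (forall t, continuity_pt f t) -> cont_from t0 f.
Proof.
  intros Hf t _ eps Heps.
  destruct (Hf t eps Heps) as [d [Hd Hfd]]. exists d. split; [exact Hd|].
  intros s _ Hs. destruct (Req_dec s t) as [->|Hst].
  - rewrite Rminus_diag, Rabs_R0. exact Heps.
  - apply Hfd. split; [split; [exact I | auto] | exact Hs].
Qed.

Lemma continuity_pt_Rmax_cont_from t0 (f : R -> R) :
  cont_from t0 f -> continuity_pt (fun s => f (Rmax t0 s)) t0.
Proof.
  intros Hf eps Heps.
  destruct (Hf t0 (Rle_refl t0) eps Heps) as [d [Hd Hfd]]. exists d. split; [exact Hd|].
  intros s [_ Hs]. simpl in *. unfold R_dist in *. rewrite (Rmax_left t0 t0) by lra.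
  apply Hfd; [apply Rmax_l|].
  unfold Rmax. destruct Rle_dec; [exact Hs | rewrite Rminus_diag, Rabs_R0; exact Hd].
Qed.

(* Integrating factor: [(y1 - y2) e^{∫ m}] has zero derivative after [t0].
   Freezing the solutions at [t0] on the left makes it continuous at [t0]. *)
Lemma linear_ode_unique (m b y1 y2 : R -> R) t0 :
  (forall z, continuity_pt m z) -> cont_from t0 y1 -> cont_from t0 y2 ->
  (forall t, t0 < t -> derivable_pt_lim y1 t (b t - m t * y1 t)) ->
  (forall t, t0 < t -> derivable_pt_lim y2 t (b t - m t * y2 t)) ->
  y1 t0 = y2 t0 -> forall t, t0 <= t -> y1 t = y2 t.
Proof.
  intros Hm Hy1 Hy2 Hd1 Hd2 Hy0 t Ht.
  set (w := fun s => y1 (Rmax t0 s) - y2 (Rmax t0 s)).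
  set (E := fun s => exp (RInt.RInt m 0 s)).
  set (P := fun s => w s * E s).
  assert (dE : forall s, is_derive E s (m s * E s)).
  { intro s. exact (is_derive_comp exp _ s _ _ (is_derive_exp _) (is_derive_RInt_0 m s Hm)). }
  assert (dw : forall s, t0 < s -> is_derive w s (- m s * w s)).
  { intros s Hs. apply (is_derive_ext_loc (fun u => y1 u - y2 u)).
    - apply (filter_imp (fun u => t0 < u)); [|exact (open_gt t0 s Hs)].
      intros u Hu. unfold w. rewrite Rmax_right by lra. reflexivity.
    - unfold w. rewrite Rmax_right by lra. apply is_derive_Reals.
      replace (- m s * (y1 s - y2 s)) with ((b s - m s * y1 s) - (b s - m s * y2 s)) by ring.
      apply derivable_pt_lim_minus; auto. }
  assert (dP : forall s, t0 < s -> is_derive P s 0).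
  { intros s Hs. replace 0 with (plus (mult (- m s * w s) (E s)) (mult (w s) (m s * E s))).
    - apply (is_derive_mult w E); [apply dw, Hs | apply dE | intros; apply Rmult_comm].
    - change (- m s * w s * E s + w s * (m s * E s) = 0). ring. }
  assert (cP : continuity_pt P t0).
  { apply (continuity_pt_mult w E).
    - apply (continuity_pt_minus (fun s => y1 (Rmax t0 s)) (fun s => y2 (Rmax t0 s)));
        apply continuity_pt_Rmax_cont_from; assumption.
    - apply derivable_continuous_pt. exists (m t0 * E t0). apply is_derive_Reals, dE. }
  destruct Ht as [Ht|<-]; [|exact Hy0].
  destruct (MVT_gen P t0 t (fun _ => 0)) as [c [_ Hc]]; cbv zeta in *;
    rewrite ?Rmin_left, ?Rmax_right in * by lra.
  - intros s Hs. apply dP. lra.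
  - intros s Hs. destruct (Req_dec s t0) as [->|Hs0]; [exact cP|].
    apply derivable_continuous_pt. exists 0. apply is_derive_Reals, dP. lra.
  - assert (HPt : P t = 0).
    { replace (P t) with (P t - P t0); [lra|].
      unfold P, w. rewrite (Rmax_left t0 t0), Hy0 by lra. ring. }
    unfold P, w in HPt. rewrite Rmax_right in HPt by lra.
    assert (0 < E t) by apply exp_pos. apply Rmult_integral in HPt. lra.
Qed.

Section Delay.

Variables (Va tau : R -> R) (Vmin Vmax c : R).
Hypothesis hVa : forall s, continuity_pt Va s.
Hypothesis hVmin : 0 < Vmin.
Hypothesis hVbd : forall s, Vmin <= Va s <= Vmax.
Hypothesis htau : forall t, c = Defs.RInt Va (t - tau t) t.

Let H : R -> R := fun v => RInt.RInt Va 0 v.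

Let dH : forall z, is_derive H z (Va z).
Proof. intro z. exact (is_derive_RInt_0 Va z hVa). Qed.

Lemma delay_shift t : H (t - tau t) = H t - c.
Proof. rewrite (htau t), (Defs_RInt_primitive Va H) by assumption. ring. Qed.

Lemma delay_pos : 0 < c -> forall t, 0 < tau t.
Proof.
  intros Hc t.
  destruct (MVT_slope_bounds H Va Vmin Vmax t (t - tau t) dH hVbd) as [k [Hk Hinc]].
  rewrite delay_shift in Hinc. nra.
Qed.

Lemma derivable_pt_lim_delay t :
  derivable_pt_lim (fun s => s - tau s) t (Va t / Va (t - tau t)).
Proof.
  assert (HVa : forall s, 0 < Va s) by (intro s; pose proof (hVbd s); lra).
  apply (derivable_pt_lim_implicit H (fun s => H s - c) _ _ _ (Vmax / Vmin)).
  - apply Rgt_not_eq, HVa.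
  - pose proof (hVbd 0). apply Rmult_le_pos; [lra | left; apply Rinv_0_lt_compat, hVmin].
  - (* [H] increases equally along [s - tau s] and [s], with slopes in [[Vmin, Vmax]]. *)
    intro z. set (D := t + z - tau (t + z) - (t - tau t)).
    destruct (MVT_slope_bounds H Va Vmin Vmax (t - tau t) (t + z - tau (t + z)) dH hVbd)
      as [k1 [Hk1 Hinc1]].
    destruct (MVT_slope_bounds H Va Vmin Vmax t (t + z) dH hVbd) as [k2 [Hk2 Hinc2]].
    rewrite !delay_shift in Hinc1.
    assert (Hk : k1 * Rabs D = k2 * Rabs z).
    { rewrite <- (Rabs_pos_eq k1), <- (Rabs_pos_eq k2), <- !Rabs_mult by lra.
      f_equal. fold D in Hinc1. replace (t + z - t) with z in Hinc2 by ring. lra. }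
    apply (Rmult_le_reg_l Vmin); [exact hVmin|].
    replace (Vmin * (Vmax / Vmin * Rabs z)) with (Vmax * Rabs z) by (field; lra).
    pose proof (Rabs_pos D). pose proof (Rabs_pos z). nra.
  - apply is_derive_Reals, dH.
  - replace (Va t) with (Va t - 0) by ring.
    apply (derivable_pt_lim_minus H (fun _ => c));
      [apply is_derive_Reals, dH | apply derivable_pt_lim_const].
  - exact delay_shift.
Qed.

End Delay.

Definition A_U_source (beta delta : R) (mu Va : R -> R) (Vs : R)
  (tmin tmax x : R -> R) (t : R) : R :=
  / (2 * delta) *
    (kernel beta mu Va Vs x t (tmin t) * (Va t / Va (t - tmin t))
     - kernel beta mu Va Vs x t (tmax t) * (Va t / Va (t - tmax t))).

Section Accumulation.

Variables (beta delta Vs : R) (mu Va tmin tmax x : R -> R).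
Hypothesis hmu : forall u, continuity_pt mu u.
Hypothesis hVa : forall s, continuity_pt Va s.
Hypothesis hVs : Vs <> 0.
Hypothesis hVa0 : forall s, Va s <> 0.
Hypothesis hx : forall t, continuity_pt x t.
Hypothesis hdmin :
  forall t, derivable_pt_lim (fun s => s - tmin s) t (Va t / Va (t - tmin t)).
Hypothesis hdmax :
  forall t, derivable_pt_lim (fun s => s - tmax s) t (Va t / Va (t - tmax t)).

Let M : R -> R := fun v => RInt.RInt (fun s => mu (x s)) 0 v.
Let g : R -> R := fun u => beta * x u / Vhat Va Vs u * exp (M u).
Let G : R -> R := fun v => RInt.RInt g 0 v.

Let mu_x_continuous : forall z, continuity_pt (fun s => mu (x s)) z.
Proof. intro z. apply (continuity_pt_comp x mu); auto. Qed.

Let dM : forall z, is_derive M z (mu (x z)).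
Proof. intro z. exact (is_derive_RInt_0 _ z mu_x_continuous). Qed.

Let g_continuous : forall z, continuity_pt g z.
Proof.
  intro z. unfold g, Vhat.
  apply (continuity_pt_mult (fun u => beta * x u / (Va u / Vs)) (fun u => exp (M u))).
  - apply (continuity_pt_div (fun u => beta * x u) (fun u => Va u / Vs)).
    + apply (continuity_pt_mult (fun _ => beta) x); [apply continuity_pt_const; intros ?? | ]; auto.
    + apply (continuity_pt_div Va (fun _ => Vs)); [|apply continuity_pt_const; intros ??|]; auto.
    + unfold Rdiv. apply Rmult_integral_contrapositive.
      split; [apply hVa0 | apply Rinv_neq_0_compat, hVs].
  - apply (continuity_pt_comp M exp); [|apply derivable_continuous_pt, derivable_pt_exp].
    apply derivable_continuous_pt. exists (mu (x z)). apply is_derive_Reals, dM.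
Qed.

Lemma kernel_eq t phi : kernel beta mu Va Vs x t phi = exp (- M t) * g (t - phi).
Proof.
  unfold kernel, g. rewrite (Defs_RInt_primitive _ M) by assumption.
  replace (- (M t - M (t - phi))) with (M (t - phi) + - M t) by ring.
  rewrite exp_plus. ring.
Qed.

(* The substitution [u = t - phi] in the defining integral of [A_U]. *)
Lemma A_U_eq t :
  A_U beta delta mu Va Vs tmin tmax x t
  = / (2 * delta) * (exp (- M t) * (G (t - tmin t) - G (t - tmax t))).
Proof.
  unfold A_U. f_equal.
  rewrite (Defs_RInt_ext _ (fun phi => exp (- M t) * g (t - phi)))
    by (intros; apply kernel_eq).
  rewrite (Defs_RInt_primitive _ (fun phi => - exp (- M t) * G (t - phi))); [ring| |].
  - intro z. apply (continuity_pt_mult (fun _ => exp (- M t)));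
      [apply continuity_pt_const; intros ??; reflexivity|].
    apply (continuity_pt_comp (fun phi => t - phi) g); [|apply g_continuous].
    apply (continuity_pt_minus (fun _ => t) (fun phi => phi));
      [apply continuity_pt_const; intros ??; reflexivity |
       apply derivable_continuous_pt, derivable_pt_id].
  - intro z. replace (exp (- M t) * g (t - z)) with (- exp (- M t) * (-1 * g (t - z))) by ring.
    apply is_derive_scal.
    apply (is_derive_comp G (fun phi => t - phi)); [apply is_derive_RInt_0, g_continuous|].
    auto_derive; [exact I | ring].
Qed.

Lemma is_derive_A_U t :
  is_derive (A_U beta delta mu Va Vs tmin tmax x) t
    (A_U_source beta delta mu Va Vs tmin tmax x t
     - mu (x t) * A_U beta delta mu Va Vs tmin tmax x t).
Proof.
  apply (is_derive_ext
    (fun t => / (2 * delta) * (exp (- M t) * (G (t - tmin t) - G (t - tmax t)))));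
    [intro; symmetry; apply A_U_eq|].
  assert (dE : is_derive (fun t => exp (- M t)) t (- mu (x t) * exp (- M t))).
  { exact (is_derive_comp exp (fun t => - M t) t _ _ (is_derive_exp _)
             (is_derive_opp _ _ _ (dM t))). }
  assert (dGmin : is_derive (fun t => G (t - tmin t)) t (Va t / Va (t - tmin t) * g (t - tmin t))).
  { exact (is_derive_comp G _ t _ _ (is_derive_RInt_0 g _ g_continuous)
             (proj2 (is_derive_Reals _ _ _) (hdmin t))). }
  assert (dGmax : is_derive (fun t => G (t - tmax t)) t (Va t / Va (t - tmax t) * g (t - tmax t))).
  { exact (is_derive_comp G _ t _ _ (is_derive_RInt_0 g _ g_continuous)
             (proj2 (is_derive_Reals _ _ _) (hdmax t))). }
  pose proof (is_derive_scal _ t (/ (2 * delta)) _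
     (is_derive_mult _ _ t _ _ dE (is_derive_minus _ _ t _ _ dGmin dGmax)
        ltac:(intros; apply Rmult_comm))) as HD.
  match type of HD with is_derive _ _ ?v => replace (_ - _) with v; [exact HD|] end.
  unfold A_U_source. rewrite !kernel_eq, A_U_eq.
  change (plus ?a ?b) with (a + b). change (mult ?a ?b) with (a * b).
  change (minus ?a ?b) with (a - b).
  match goal with |- ?a = ?b => change (@eq R a b) end. ring.
Qed.

End Accumulation.

Lemma derivable_pt_lim_A_U beta delta mu Va Vs Vmin Vmax cmin cmax tmin tmax x t :
  (forall u, continuity_pt mu u) -> (forall s, continuity_pt Va s) -> Vs <> 0 ->
  0 < Vmin -> (forall s, Vmin <= Va s <= Vmax) ->
  (forall t, cmin = Defs.RInt Va (t - tmin t) t) ->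
  (forall t, cmax = Defs.RInt Va (t - tmax t) t) ->
  (forall t, continuity_pt x t) ->
  derivable_pt_lim (A_U beta delta mu Va Vs tmin tmax x) t
    (A_U_source beta delta mu Va Vs tmin tmax x t
     - mu (x t) * A_U beta delta mu Va Vs tmin tmax x t).
Proof.
  intros hmu hVa hVs hVmin hVbd htmin htmax hx.
  apply is_derive_Reals, is_derive_A_U; auto.
  - intro s. pose proof (hVbd s). lra.
  - exact (derivable_pt_lim_delay Va tmin Vmin Vmax cmin hVa hVmin hVbd htmin).
  - exact (derivable_pt_lim_delay Va tmax Vmin Vmax cmax hVa hVmin hVbd htmax).
Qed.

Lemma A_U_history beta delta mu Va Vs tmin tmax (x z : R -> R) t0 :
  0 <= tmin t0 -> 0 <= tmax t0 -> (forall s, s <= t0 -> x s = z s) ->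
  A_U beta delta mu Va Vs tmin tmax x t0 = A_U beta delta mu Va Vs tmin tmax z t0.
Proof.
  intros Hmin Hmax Hxz. unfold A_U. f_equal. apply Defs_RInt_ext. intros phi Hphi.
  assert (0 <= phi) by (pose proof (Rmin_glb _ _ _ Hmin Hmax); lra).
  unfold kernel. rewrite (Hxz (t0 - phi)) by lra. do 3 f_equal.
  apply Defs_RInt_ext. intros s Hs. rewrite Rmin_left, Rmax_right in Hs by lra.
  rewrite Hxz by lra. reflexivity.
Qed.

Theorem theorem4p2
  (F : R -> R -> R) (gamma mu : R -> R) (beta delta : R)
  (Va : R -> R) (Vs Vmin Vmax T : R) (tmin tmax : R -> R) (t0 : R)
  (hbeta : 0 < beta) (hdelta : 0 < delta)
  (hVs : 0 < Vs) (hT : Vs * delta < T)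
  (hmu : forall u, continuity_pt mu u)
  (hVa : forall s, continuity_pt Va s)
  (hVmin : 0 < Vmin) (hVbd : forall s, Vmin <= Va s <= Vmax)
  (htmin : forall t, T - Vs * delta = RInt Va (t - tmin t) t)
  (htmax : forall t, T + Vs * delta = RInt Va (t - tmax t) t) :
  (* (i) *)
  (forall rho x : R -> R,
     solves_U F gamma mu beta delta Va Vs tmin tmax t0 rho x ->
     solves_D F gamma mu beta delta Va Vs tmin tmax t0 rho x
       (A_U beta delta mu Va Vs tmin tmax x) /\
     A_U beta delta mu Va Vs tmin tmax x t0
       = A_U beta delta mu Va Vs tmin tmax rho t0) /\
  (* (ii) *)
  (forall eta x y : R -> R,
     solves_D F gamma mu beta delta Va Vs tmin tmax t0 eta x y ->
     ((solves_U F gamma mu beta delta Va Vs tmin tmax t0 eta x /\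
       forall t, t0 <= t -> y t = A_U beta delta mu Va Vs tmin tmax x t)
      <-> y t0 = A_U beta delta mu Va Vs tmin tmax eta t0)).
Proof.
  assert (Hmin0 : 0 <= tmin t0).
  { left. apply (delay_pos Va tmin Vmin Vmax (T - Vs * delta)); auto. lra. }
  assert (Hmax0 : 0 <= tmax t0).
  { left. apply (delay_pos Va tmax Vmin Vmax (T + Vs * delta)); auto. nra. }
  assert (dA : forall x, (forall t, continuity_pt x t) -> forall t,
    derivable_pt_lim (A_U beta delta mu Va Vs tmin tmax x) t
      (A_U_source beta delta mu Va Vs tmin tmax x t
       - mu (x t) * A_U beta delta mu Va Vs tmin tmax x t)).
  { intros x hx t. apply (derivable_pt_lim_A_U _ _ _ _ _ Vmin Vmax (T - Vs * delta)
      (T + Vs * delta)); auto. lra. }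
  assert (cA : forall x, (forall t, continuity_pt x t) ->
            cont_from t0 (A_U beta delta mu Va Vs tmin tmax x)).
  { intros x hx. apply cont_from_continuity_pt. intro t.
    apply derivable_continuous_pt. eexists. apply dA, hx. }
  split.
  - intros rho x [Hh [Hc Hd]].
    split; [repeat split; auto | apply A_U_history; auto].
  - intros eta x y [Hh [Hc [Hy [Hdx Hdy]]]]. split.
    + intros [_ Heq]. rewrite Heq by lra. apply A_U_history; auto.
    + intro Hy0.
      assert (Heq : forall t, t0 <= t -> y t = A_U beta delta mu Va Vs tmin tmax x t).
      { apply (linear_ode_unique (fun s => mu (x s))
          (A_U_source beta delta mu Va Vs tmin tmax x)); auto.
        - intro z. apply (continuity_pt_comp x mu); auto.
        - rewrite Hy0. symmetry. apply A_U_history; auto. }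
      repeat split; auto.
      intros t Ht. rewrite <- Heq by lra. auto.
Qed.
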